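(* There exist absolute constants $c>0$ and $\delta_0>0$ such that the following holds: if $\delta\in(0,\delta_0]$, $r\in\mathbb{N}$, and $q$ is a univariate sum-of-squares polynomial of degree $r$ with $\|(1-x^2)-q\|_{1,\mathrm{cheb}}\le\delta$, then $r\ge c/\sqrt\delta$. That is, $r=\Omega(1/\sqrt\delta)$.
   Context: $T_k(x)=\cos(k\arccos x)$ is the Chebyshev polynomial of the first kind; for a univariate polynomial $p=\sum_kc_kT_k$, $\|p\|_{1,\mathrm{cheb}}=\sum_k|c_k|$. *)

From HB Require Import structures.
From mathcomp Require Import all_boot all_order all_algebra.
From mathcomp Require Import Rstruct.
From Stdlib Require Import Reals.
Set Implicit Arguments. Unset Strict Implicit. Unset Printing Implicit Defensive.
Import Order.TTheory GRing.Theory Num.Theory.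
Local Open Scope ring_scope.

(* Chebyshev polynomials of the first kind: T_0 = 1, T_1 = X,
   T_{k+2} = 2 X T_{k+1} - T_k  (so that T_k(cos t) = cos (k t)). *)
Fixpoint chebT_aux (k : nat) : {poly R} * {poly R} :=
  match k with
  | 0%N => (1, 'X)
  | k'.+1 => let: (a, b) := chebT_aux k' in (b, 2%:R *: 'X * b - a)
  end.
Definition chebT (k : nat) : {poly R} := (chebT_aux k).1.

(* Since (T_k) is a basis of R[x], the expansion is unique (up to trailing zeros),
   so this says exactly ||p||_{1,cheb} <= d. *)
Definition cheb1_norm_le (p : {poly R}) (d : R) : Prop :=
  exists (n : nat) (c : nat -> R),
    p = \sum_(k < n) c k *: chebT k /\ \sum_(k < n) `|c k| <= d.

Definition is_sos (q : {poly R}) : Prop :=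
  exists s : seq {poly R}, q = \sum_(p <- s) p ^+ 2.

(* Evaluate the error e = (1 - x^2) - q just to the right of the interval, at
   x = 1 + h.  Since q is a sum of squares, e(1 + h) <= 1 - (1 + h)^2 <= -2h.
   On the other hand, take m >= deg e and 2h(m + 1)^2 = 1: the three-term
   recurrence gives 1 <= T_k(1 + h) <= 2 for all k <= m, and the Chebyshev
   expansion of e has no terms beyond deg e because deg T_k = k, so
   |e(1 + h)| <= 2 ||e||_{1,cheb} <= 2 delta.  Hence h <= delta, that is
   (deg q + 3)^2 >= 1 / (2 delta). *)

From HB Require Import structures.
From mathcomp Require Import all_boot all_order all_algebra.
From mathcomp Require Import Rstruct.
From Stdlib Require Import Reals.
From mathcomp Require Import ring lra zify.
Set Implicit Arguments. Unset Strict Implicit. Unset Printing Implicit Defensive.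
Import Order.TTheory GRing.Theory Num.Theory.
Local Open Scope ring_scope.

Lemma chebT0 : chebT 0 = 1. Proof. by []. Qed.

Lemma chebT1 : chebT 1 = 'X. Proof. by []. Qed.

Lemma chebTSS (k : nat) : chebT k.+2 = 2%:R *: 'X * chebT k.+1 - chebT k.
Proof. by rewrite /chebT /=; case: (chebT_aux k). Qed.

Lemma horner_chebTSS (k : nat) (x : R) :
  (chebT k.+2).[x] = 2 * x * (chebT k.+1).[x] - (chebT k).[x].
Proof. by rewrite chebTSS !hornerE. Qed.

Lemma size_chebT (k : nat) : size (chebT k) = k.+1.
Proof.
suff: size (chebT k) = k.+1 /\ size (chebT k.+1) = k.+2 by case.
elim: k => [|k [IHk IHk1]]; first by rewrite chebT0 chebT1 size_polyC size_polyX oner_neq0.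
have sizeXT : size ('X * chebT k.+1) = k.+3 by rewrite mulrC size_mulX -?size_poly_eq0 IHk1.
split=> //; rewrite chebTSS size_polyDl -scalerAl size_scale ?pnatr_eq0 //.
by rewrite size_polyN sizeXT IHk.
Qed.

Lemma cheb_expansion_coef_eq0 (e : {poly R}) (n : nat) (c : nat -> R) (i : nat) :
  e = \sum_(k < n) c k *: chebT k -> (size e <= i)%nat -> (i < n)%nat -> c i = 0.
Proof.
elim: n e => [|n IH] e -> Hs Hin //.
pose S : {poly R} := \sum_(k < n) c k *: chebT k.
have low : (size S <= n)%nat.
  apply/leq_sizeP => j Hj; rewrite coef_sum big1 // => k _.
  by rewrite coefZ nth_default ?mulr0 // size_chebT (leq_trans (ltn_ord k)).
rewrite big_ord_recr /= -/S in Hs.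
have cn0 : c n = 0.
  have := nth_default 0 (leq_trans Hs (Hin : (i <= n)%nat)).
  rewrite coefD coefZ (nth_default _ low) add0r => /eqP.
  rewrite mulf_eq0 => /orP[/eqP //|].
  have : lead_coef (chebT n) != 0 by rewrite lead_coef_eq0 -size_poly_eq0 size_chebT.
  by rewrite lead_coefE size_chebT => /negPf ->.
rewrite ltnS leq_eqVlt in Hin; case/orP: Hin => [/eqP -> //|Hin].
by apply: (IH _ erefl) => //; move: Hs; rewrite cn0 scale0r addr0.
Qed.

Lemma cheb1_norm_le_horner (e : {poly R}) (d x B : R) :
  cheb1_norm_le e d -> 0 <= B ->
  (forall k, (k < size e)%nat -> `|(chebT k).[x]| <= B) -> `|e.[x]| <= B * d.
Proof.
case=> n [c [De Hc]] B0 HB; rewrite De horner_sum.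
apply: le_trans (ler_norm_sum _ _ _) _.
apply: le_trans (ler_wpM2l B0 Hc); rewrite mulr_sumr.
apply: ler_sum => k _; rewrite hornerZ normrM mulrC.
case: (ltnP k (size e)) => [Hk|Hk]; first by rewrite ler_wpM2r ?HB.
by rewrite (cheb_expansion_coef_eq0 De Hk (ltn_ord k)) normr0 !mulr0.
Qed.

Lemma chebT_near1 (h : R) (k : nat) : 0 <= h ->
  2 * h * ((k%:R + 1) * (k%:R + 2)) <= 1 ->
  [/\ 1 <= (chebT k).[1 + h], (chebT k).[1 + h] <= (chebT k.+1).[1 + h],
      (chebT k.+1).[1 + h] - (chebT k).[1 + h] <= 4 * h * (k%:R + 1)
    & (chebT k.+1).[1 + h] <= 1 + 2 * h * ((k%:R + 1) * (k%:R + 2))].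
Proof.
move=> h0; elim: k => [|k IH] Hk.
  by rewrite chebT0 chebT1 hornerC hornerX; split; lra.
have k0 : 0 <= k%:R :> R by rewrite ler0n.
rewrite -(natr1 k) in Hk *.
have [|a1 ab dab b2] := IH; first by nra.
(* T_(k+2) - T_(k+1) = (T_(k+1) - T_k) + 2h T_(k+1): the gaps grow by at most 4h. *)
rewrite horner_chebTSS; split; nra.
Qed.

Lemma chebT_near1_le2 (h : R) (k : nat) : 0 <= h ->
  2 * h * (k%:R + 1) ^+ 2 <= 1 -> `|(chebT k).[1 + h]| <= 2.
Proof.
move=> h0; case: k => [|k] Hk; first by rewrite chebT0 hornerE normr1; lra.
have k0 : 0 <= k%:R :> R by rewrite ler0n.
rewrite -(natr1 k) in Hk.
have [|a1 ab _ b2] := chebT_near1 (k := k) h0; first by rewrite expr2 in Hk; nra.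
rewrite expr2 in Hk; rewrite ger0_norm; nra.
Qed.

Lemma sos_horner_ge0 (q : {poly R}) (x : R) : is_sos q -> 0 <= q.[x].
Proof.
by case=> s ->; rewrite horner_sum sumr_ge0 // => p _; rewrite horner_exp sqr_ge0.
Qed.

Lemma sos_cheb1_approx_bound (q : {poly R}) (d : R) (m : nat) :
  is_sos q -> (2 <= m)%nat -> (size q <= m.+1)%nat ->
  cheb1_norm_le (1 - 'X ^+ 2 - q) d -> 1 <= 2 * d * (m%:R + 1) ^+ 2.
Proof.
move=> Hq m2 Hq_size Hd; set M := m%:R + 1 : R; set e := 1 - 'X ^+ 2 - q in Hd *.
have He_size : (size e <= m.+1)%nat.
  rewrite /e (leq_trans (size_polyD _ _)) // geq_max size_polyN Hq_size andbT.
  by rewrite (leq_trans (size_polyD _ _)) // size_polyN size_poly1 size_polyXn.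
have M0 : 0 < M by rewrite ltr_pwDr ?ler0n.
pose h := (2 * M ^+ 2)^-1.
have h0 : 0 < h by rewrite invr_gt0 mulr_gt0 ?exprn_gt0.
have hM : 2 * h * M ^+ 2 = 1 by rewrite mulrAC mulfV // mulf_neq0 ?expf_neq0 ?lt0r_neq0.
have Hbound : `|e.[1 + h]| <= 2 * d.
  apply: cheb1_norm_le_horner Hd _ _ => // k Hk; apply: chebT_near1_le2 (ltW h0) _.
  have kM : k%:R + 1 <= M by rewrite lerD2r ler_nat -ltnS (leq_trans Hk He_size).
  have kM2 : (k%:R + 1) ^+ 2 <= M ^+ 2 by rewrite ler_pXn2r // nnegrE ?ltW // ltr_pwDr ?ler0n.
  by rewrite -[X in _ <= X]hM ler_pM2l // mulr_gt0.
have Hneg : e.[1 + h] <= - (2 * h).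
  by have := sos_horner_ge0 (1 + h) Hq; rewrite !hornerE; nra.
have hd : h <= d by move: Hbound; rewrite ler_norml => /andP[]; lra.
by rewrite -[X in X <= _]hM ler_pM2r ?exprn_gt0 // ler_pM2l.
Qed.

Lemma inv_sqrt_le_of_sq_bound (F : rcfType) (d x : F) :
  0 < d -> d <= 1 / 100 -> 0 <= x -> 1 <= 2 * d * (x + 3) ^+ 2 ->
  1 / 3 / Num.sqrt d <= x.
Proof.
move=> d0 d1 x0 key; have s0 : 0 < Num.sqrt d by rewrite sqrtr_gt0.
have dE : d = Num.sqrt d ^+ 2 by rewrite sqr_sqrtr // ltW.
rewrite ler_pdivrMr //; rewrite {}dE !expr2 in key d1; rewrite -mulrA mulrACA in key.
set s := Num.sqrt d in s0 key d1 *.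
have s_small : s <= 1 / 10 by nra.
have u0 : 0 <= s * (x + 3) by nra.
have u_large : 7 / 10 <= s * (x + 3) by nra.
nra.
Qed.

Theorem theorem10 :
  exists (c delta0 : R), 0 < c /\ 0 < delta0 /\
    forall (delta : R) (r : nat) (q : {poly R}),
      0 < delta -> delta <= delta0 ->
      is_sos q -> (size q).-1 = r ->
      cheb1_norm_le ((1 - 'X ^+ 2) - q) delta ->
      c / Num.sqrt delta <= r%:R.
Proof.
exists (1 / 3), (1 / 100); split; first lra; split; first lra.
move=> d r q d0 d1 Hq Hr Hd.
apply: inv_sqrt_le_of_sq_bound; rewrite ?ler0n //.
have size_q : (size q <= r.+3)%nat by rewrite -Hr; lia.
have -> : r%:R + 3 = r.+2%:R + 1 :> R by rewrite -!natr1; ring.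
exact: (@sos_cheb1_approx_bound q d r.+2 Hq isT size_q Hd).
Qed.
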